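(* There is an absolute constant $C>0$ such that the following holds. Let $U^*,S,p_{ijk},\widehat p_{ijk},\mathcal{W}_{ijk},\delta_{ijk}$ be as in the context, and let $U\in\mathbb{R}^{n\times r}$ be fixed (independent of $\delta$) with unit-norm columns and $|U_{il}|\le2\|(U^* )^i\|$ for all $i,l$. Fix $q\in[r]$ and unit vectors $a,b,c\in\mathbb{R}^n$ with $|a_i|,|b_i|,|c_i|\le2\|(U^* )^i\|$ for all $i$. Let $B,R$ be the $n\times n$ diagonal matrices with $B_{ii}=\sum_{j,k}\delta_{ijk}\mathcal{W}_{ijk}U_{jq}^2U_{kq}^2$ and $R_{ii}=\sum_{j,k}\delta_{ijk}\mathcal{W}_{ijk}U_{jq}U_{kq}a_jb_k$. Let $\gamma\in(0,1]$. If $m\ge\frac{C}{\gamma^2}n\log(n)S^2$, then with probability at least $1-n^{-10}$, $$\big\|(\langle U_q,a\rangle\langle U_q,b\rangle B-R)c\big\|\le\gamma\sqrt{1-\langle U_q,a\rangle^2\langle U_q,b\rangle^2}.$$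
   Context: $U^*\in\mathbb{R}^{n\times r}$ has orthonormal columns $U^*_l$ and rows $(U^* )^i$; $S=\sum_i\|(U^* )^i\|^{3/2}$; $p_{ijk}=\frac{\|(U^* )^i\|^{3/2}\|(U^* )^j\|^{3/2}+\|(U^* )^j\|^{3/2}\|(U^* )^k\|^{3/2}+\|(U^* )^k\|^{3/2}\|(U^* )^i\|^{3/2}}{3nS^2}$; $\widehat p_{ijk}=\min\{mp_{ijk},1\}$; $\mathcal{W}_{ijk}=1/\widehat p_{ijk}$ if $\widehat p_{ijk}>0$, else $0$; $\delta_{ijk}$ are independent Bernoulli$(\widehat p_{ijk})$ random variables. *)

From Stdlib Require Import Reals List Arith.
Import ListNotations.
Open Scope R_scope.

Fixpoint sumn (n : nat) (f : nat -> R) : R :=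
  match n with
  | O => 0
  | S n' => sumn n' f + f n'
  end.

Definition vnorm (n : nat) (v : nat -> R) : R := sqrt (sumn n (fun i => v i ^ 2)).

Definition inner (n : nat) (u v : nat -> R) : R := sumn n (fun i => u i * v i).

Definition pow32 (x : R) : R := x * sqrt x.

(* A matrix M in R^{n x r} is a function nat -> nat -> R (row, column). *)
Definition rownorm (r : nat) (Ustar : nat -> nat -> R) (i : nat) : R :=
  vnorm r (fun l => Ustar i l).

Definition Sconst (n r : nat) (Ustar : nat -> nat -> R) : R :=
  sumn n (fun i => pow32 (rownorm r Ustar i)).

Definition p_ijk (n r : nat) (Ustar : nat -> nat -> R) (i j k : nat) : R :=
  let w := fun t => pow32 (rownorm r Ustar t) in
  (w i * w j + w j * w k + w k * w i) / (3 * INR n * (Sconst n r Ustar) ^ 2).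

Definition phat (n r : nat) (Ustar : nat -> nat -> R) (m : nat) (i j k : nat) : R :=
  Rmin (INR m * p_ijk n r Ustar i j k) 1.

Definition Wgt (n r : nat) (Ustar : nat -> nat -> R) (m : nat) (i j k : nat) : R :=
  if Rlt_dec 0 (phat n r Ustar m i j k) then / phat n r Ustar m i j k else 0.

Definition orthonormal_cols (n r : nat) (M : nat -> nat -> R) : Prop :=
  forall l l', (l < r)%nat -> (l' < r)%nat ->
    inner n (fun i => M i l) (fun i => M i l') = if Nat.eqb l l' then 1 else 0.

(* Outcomes of the Bernoulli variables delta_{ijk} *)
Definition outcome := nat -> nat -> nat -> bool.

Definition triples (n : nat) : list (nat * nat * nat) :=
  flat_map (fun i => flat_map (fun j => map (fun k => (i, j, k)) (seq 0 n)) (seq 0 n)) (seq 0 n).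

Definition upd (d : outcome) (t : nat * nat * nat) (v : bool) : outcome :=
  let '(i, j, k) := t in
  fun i' j' k' => if (Nat.eqb i' i && Nat.eqb j' j && Nat.eqb k' k)%bool then v else d i' j' k'.

(* Expectation of F over independent Bernoulli(pr t) variables indexed by ts,
   the remaining coordinates being fixed as in d. *)
Fixpoint expect (pr : nat -> nat -> nat -> R) (ts : list (nat * nat * nat))
    (F : outcome -> R) (d : outcome) : R :=
  match ts with
  | [] => F d
  | t :: ts' =>
      let '(i, j, k) := t in
      pr i j k * expect pr ts' F (upd d t true)
      + (1 - pr i j k) * expect pr ts' F (upd d t false)
  end.

Definition prob (n : nat) (pr : nat -> nat -> nat -> R) (E : outcome -> bool) : R :=
  expect pr (triples n) (fun d => if E d then 1 else 0) (fun _ _ _ => false).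

Definition b2r (b : bool) : R := if b then 1 else 0.

Definition Bdiag (n r : nat) (Ustar : nat -> nat -> R) (m : nat) (U : nat -> nat -> R)
    (q : nat) (d : outcome) (i : nat) : R :=
  sumn n (fun j => sumn n (fun k =>
    b2r (d i j k) * Wgt n r Ustar m i j k * (U j q) ^ 2 * (U k q) ^ 2)).

Definition Rdiag (n r : nat) (Ustar : nat -> nat -> R) (m : nat) (U : nat -> nat -> R)
    (q : nat) (a b : nat -> R) (d : outcome) (i : nat) : R :=
  sumn n (fun j => sumn n (fun k =>
    b2r (d i j k) * Wgt n r Ustar m i j k * U j q * U k q * a j * b k)).

Definition good_event (n r : nat) (Ustar : nat -> nat -> R) (m : nat) (U : nat -> nat -> R)
    (q : nat) (a b c : nat -> R) (gamma : R) (d : outcome) : bool :=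
  let al := inner n (fun j => U j q) a in
  let be := inner n (fun j => U j q) b in
  if Rle_dec
       (vnorm n (fun i => (al * be * Bdiag n r Ustar m U q d i - Rdiag n r Ustar m U q a b d i) * c i))
       (gamma * sqrt (1 - al ^ 2 * be ^ 2))
  then true else false.

(* The deviation [|(<U_q,a><U_q,b> B - R) c|] is the Euclidean norm of the linear statistic
   [y_i = sum_jk delta_ijk W_ijk c_i U_jq U_kq e_jk] of the independent Bernoulli variables,
   where [e_jk = <U_q,a><U_q,b> U_jq U_kq - a_j b_k] satisfies [|e|^2 = 1 - <U_q,a>^2 <U_q,b>^2].
   Inverse-probability weighting makes [E y = 0]; since [|U_jl|, |c_i| <= 2 |U*^i|], the
   3/2-power sampling probabilities bound the variance proxy [sum p (1 - p) (W c U U e)^2] by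
   [48 (n S^2 / m) |e|^2], so [E |y| <= gamma |e| / 4] by Jensen.  Flipping one [delta_ijk]
   moves [|y|] by at most [W_ijk |c_i U_jq U_kq e_jk|], so a Bernstein-type bound on the
   exponential moment along the Doob martingale of [|y|], followed by Markov's inequality,
   yields the tail [n^-10] as soon as [m >= 8192 n log n S^2 / gamma^2]. *)

From Stdlib Require Import Reals Lra Psatz Lia List FunctionalExtensionality.
Import ListNotations.
Open Scope R_scope.

Lemma Rabs_le_bounds x y : Rabs x <= y -> - y <= x <= y.
Proof. unfold Rabs; destruct (Rcase_abs x); lra. Qed.

Lemma sumn_ext n f g : (forall i, (i < n)%nat -> f i = g i) -> sumn n f = sumn n g.
Proof.
  induction n as [|n IH]; intros H; simpl; [reflexivity|].
  rewrite IH, H by (auto; intros; apply H; lia); reflexivity.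
Qed.

Lemma sumn_add n f g : sumn n (fun i => f i + g i) = sumn n f + sumn n g.
Proof. induction n as [|n IH]; simpl; [lra|]. rewrite IH; ring. Qed.

Lemma sumn_sub n f g : sumn n (fun i => f i - g i) = sumn n f - sumn n g.
Proof. induction n as [|n IH]; simpl; [lra|]. rewrite IH; ring. Qed.

Lemma sumn_scal n x f : sumn n (fun i => x * f i) = x * sumn n f.
Proof. induction n as [|n IH]; simpl; [lra|]. rewrite IH; ring. Qed.

Lemma sumn_zero n : sumn n (fun _ => 0) = 0.
Proof. induction n as [|n IH]; simpl; [lra|]. rewrite IH; ring. Qed.

Lemma sumn_le n f g : (forall i, (i < n)%nat -> f i <= g i) -> sumn n f <= sumn n g.
Proof.
  induction n as [|n IH]; intros H; simpl; [lra|].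
  assert (f n <= g n) by (apply H; lia).
  assert (sumn n f <= sumn n g) by (apply IH; intros; apply H; lia).
  lra.
Qed.

Lemma sumn_nonneg n f : (forall i, (i < n)%nat -> 0 <= f i) -> 0 <= sumn n f.
Proof. intros H. rewrite <- (sumn_zero n). apply sumn_le, H. Qed.

Lemma sumn_delta n i0 x : (i0 < n)%nat ->
  sumn n (fun i => if Nat.eqb i i0 then x else 0) = x.
Proof.
  induction n as [|n IH]; intros Hi; simpl; [lia|].
  destruct (Nat.eq_dec i0 n) as [->|Hne].
  - rewrite Nat.eqb_refl, (sumn_ext n _ (fun _ => 0)), sumn_zero; [ring|].
    intros i Hi'. destruct (Nat.eqb_spec i n); [lia|reflexivity].
  - rewrite IH by lia. destruct (Nat.eqb_spec n i0); [lia|ring].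
Qed.

Lemma sumn_term_le n f i0 :
  (forall i, (i < n)%nat -> 0 <= f i) -> (i0 < n)%nat -> f i0 <= sumn n f.
Proof.
  intros H Hi. rewrite <- (sumn_delta n i0 (f i0)) by exact Hi.
  apply sumn_le. intros i Hi'. destruct (Nat.eqb_spec i i0) as [->|]; [lra|auto].
Qed.

Lemma sumn_swap n m f :
  sumn n (fun i => sumn m (fun j => f i j)) = sumn m (fun j => sumn n (fun i => f i j)).
Proof. induction n as [|n IH]; simpl; [now rewrite sumn_zero|]. now rewrite IH, <- sumn_add. Qed.

Lemma sumn_mul_sumn n m f g :
  sumn n (fun j => sumn m (fun k => f j * g k)) = sumn n f * sumn m g.
Proof.
  transitivity (sumn n (fun j => sumn m g * f j)).
  - apply sumn_ext; intros j _. rewrite Rmult_comm, <- sumn_scal.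
    apply sumn_ext; intros; ring.
  - rewrite sumn_scal; ring.
Qed.

Lemma sumn2_delta n j0 k0 x f : (j0 < n)%nat -> (k0 < n)%nat ->
  sumn n (fun j => sumn n (fun k =>
    f j k + (if (Nat.eqb j j0 && Nat.eqb k k0)%bool then x else 0)))
  = sumn n (fun j => sumn n (fun k => f j k)) + x.
Proof.
  intros Hj Hk.
  rewrite (sumn_ext n _ (fun j => sumn n (fun k => f j k) + (if Nat.eqb j j0 then x else 0))).
  - now rewrite sumn_add, sumn_delta.
  - intros j _. rewrite sumn_add. f_equal.
    destruct (Nat.eqb j j0); simpl; [now apply sumn_delta | apply sumn_zero].
Qed.

Lemma sumsq_nonneg n f : 0 <= sumn n (fun i => f i ^ 2).
Proof. apply sumn_nonneg; intros; apply pow2_ge_0. Qed.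

Lemma sumsq_add_delta n y i0 x : (i0 < n)%nat ->
  sumn n (fun i => (y i + (if Nat.eqb i i0 then x else 0)) ^ 2)
  = sumn n (fun i => y i ^ 2) + (2 * y i0 * x + x ^ 2).
Proof.
  intros Hi. rewrite <- (sumn_delta n i0 (2 * y i0 * x + x ^ 2)), <- sumn_add by exact Hi.
  apply sumn_ext; intros i _. destruct (Nat.eqb_spec i i0) as [->|]; ring.
Qed.

Lemma vnorm_ext n f g : (forall i, (i < n)%nat -> f i = g i) -> vnorm n f = vnorm n g.
Proof. intros H. unfold vnorm. f_equal. apply sumn_ext. intros i Hi; now rewrite H. Qed.

Lemma vnorm_sq n f : vnorm n f ^ 2 = sumn n (fun i => f i ^ 2).
Proof. apply pow2_sqrt, sumsq_nonneg. Qed.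

Lemma vnorm_add_delta_le n y i0 x : (i0 < n)%nat ->
  Rabs (vnorm n (fun i => y i + (if Nat.eqb i i0 then x else 0)) - vnorm n y) <= Rabs x.
Proof.
  intros Hi. unfold vnorm. rewrite sumsq_add_delta by exact Hi.
  set (N := sumn n (fun i => y i ^ 2)).
  assert (Hy : y i0 ^ 2 <= N)
    by (apply (sumn_term_le n (fun i => y i ^ 2)); auto; intros; apply pow2_ge_0).
  set (A := sqrt N).
  assert (HA : 0 <= A) by apply sqrt_pos.
  assert (HA2 : A ^ 2 = N) by apply pow2_sqrt, sumsq_nonneg.
  assert (Hya : - A <= y i0 <= A) by (split; nra).
  assert (Hlo : (A - Rabs x) ^ 2 <= N + (2 * y i0 * x + x ^ 2)).
  { rewrite <- HA2. unfold Rabs; destruct (Rcase_abs x); nra. }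
  assert (Hhi : N + (2 * y i0 * x + x ^ 2) <= (A + Rabs x) ^ 2).
  { rewrite <- HA2. unfold Rabs; destruct (Rcase_abs x); nra. }
  pose proof (Rabs_pos x).
  apply sqrt_le_1_alt in Hlo. apply sqrt_le_1_alt in Hhi.
  rewrite sqrt_pow2 in Hhi by lra.
  apply Rabs_le. split; [|lra].
  destruct (Rle_or_lt 0 (A - Rabs x)).
  - rewrite sqrt_pow2 in Hlo by assumption. lra.
  - pose proof (sqrt_pos (N + (2 * y i0 * x + x ^ 2))). lra.
Qed.

Lemma expect_cons pr i j k ts F d : expect pr ((i, j, k) :: ts) F d =
  pr i j k * expect pr ts F (upd d (i, j, k) true)
  + (1 - pr i j k) * expect pr ts F (upd d (i, j, k) false).
Proof. reflexivity. Qed.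

Section Expectation.
Variable pr : nat -> nat -> nat -> R.

Lemma expect_ext ts F G : (forall d, F d = G d) -> forall d, expect pr ts F d = expect pr ts G d.
Proof.
  induction ts as [|[[i j] k] ts IH]; intros H d; [apply H|].
  rewrite !expect_cons, !IH by exact H; reflexivity.
Qed.

Lemma expect_lin ts F G x y d :
  expect pr ts (fun d => x * F d + y * G d) d = x * expect pr ts F d + y * expect pr ts G d.
Proof.
  revert d; induction ts as [|[[i j] k] ts IH]; intros d; [reflexivity|].
  rewrite !expect_cons, !IH; ring.
Qed.

Lemma expect_const ts x d : expect pr ts (fun _ => x) d = x.
Proof.
  revert d; induction ts as [|[[i j] k] ts IH]; intros d; [reflexivity|].
  rewrite !expect_cons, !IH; ring.
Qed.

Hypothesis pr_range : forall i j k, 0 <= pr i j k <= 1.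

Lemma expect_mono ts F G : (forall d, F d <= G d) -> forall d, expect pr ts F d <= expect pr ts G d.
Proof.
  intros H. induction ts as [|[[i j] k] ts IH]; intros d; [apply H|]. rewrite !expect_cons.
  pose proof (pr_range i j k).
  pose proof (IH (upd d (i, j, k) true)). pose proof (IH (upd d (i, j, k) false)).
  nra.
Qed.

Lemma expect_abs_le ts F D : (forall d, Rabs (F d) <= D) -> forall d, Rabs (expect pr ts F d) <= D.
Proof.
  intros H d. apply Rabs_le. split.
  - rewrite <- (expect_const ts (- D) d). apply expect_mono.
    intros d'; pose proof (Rabs_le_bounds _ _ (H d')); lra.
  - rewrite <- (expect_const ts D d). apply expect_mono.
    intros d'; pose proof (Rabs_le_bounds _ _ (H d')); lra.
Qed.

Lemma expect_le_sqrt_expect_sq ts F d : expect pr ts F d <= sqrt (expect pr ts (fun d => F d ^ 2) d).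
Proof.
  set (mu := expect pr ts F d).
  assert (Hvar : 0 <= expect pr ts (fun d => (F d - mu) ^ 2) d).
  { rewrite <- (expect_const ts 0 d). apply expect_mono. intros; apply pow2_ge_0. }
  rewrite (expect_ext ts _ (fun d => 1 * (F d ^ 2) + 1 * ((- 2 * mu) * F d + mu ^ 2 * 1)))
    in Hvar by (intros; ring).
  rewrite !expect_lin, expect_const in Hvar. fold mu in Hvar.
  destruct (Rle_or_lt mu 0). { pose proof (sqrt_pos (expect pr ts (fun d => F d ^ 2) d)). lra. }
  rewrite <- (sqrt_pow2 mu) by lra. apply sqrt_le_1_alt. lra.
Qed.

(* Markov's inequality applied to [exp (lam * F)]. *)
Lemma expect_indicator_ge ts F t lam d : 0 <= lam ->
  expect pr ts (fun d => if Rle_dec (F d) t then 1 else 0) d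
  >= 1 - exp (- (lam * t)) * expect pr ts (fun d => exp (lam * F d)) d.
Proof.
  intros Hlam. apply Rle_ge.
  rewrite <- (expect_const ts 1 d) at 1.
  replace (expect pr ts (fun _ => 1) d - exp (- (lam * t)) * expect pr ts (fun d => exp (lam * F d)) d)
    with (expect pr ts (fun d => 1 * 1 + (- exp (- (lam * t))) * exp (lam * F d)) d)
    by (rewrite expect_lin, expect_const; ring).
  apply expect_mono. intros d'.
  replace (1 * 1 + - exp (- (lam * t)) * exp (lam * F d')) with (1 - exp (- (lam * t) + lam * F d'))
    by (rewrite exp_plus; ring).
  destruct (Rle_dec (F d') t).
  - pose proof (exp_pos (- (lam * t) + lam * F d')). lra.
  - pose proof (exp_ineq1_le (- (lam * t) + lam * F d')). nra.
Qed.

End Expectation.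

Lemma upd_comm d t t' x x' : t <> t' -> upd (upd d t x) t' x' = upd (upd d t' x') t x.
Proof.
  destruct t as [[i j] k], t' as [[i' j'] k']; simpl; intros Hne.
  do 3 (apply functional_extensionality; intro).
  repeat match goal with |- context [Nat.eqb ?u ?w] => destruct (Nat.eqb_spec u w) end;
    simpl; subst; congruence.
Qed.

Lemma expect_upd pr ts F t x : ~ In t ts -> forall d,
  expect pr ts F (upd d t x) = expect pr ts (fun d' => F (upd d' t x)) d.
Proof.
  induction ts as [|[[i j] k] ts IH]; intros Hn d; [reflexivity|]. rewrite !expect_cons.
  simpl in Hn. rewrite !(upd_comm _ t (i, j, k)), !IH by (auto; intros ->; auto). reflexivity.
Qed.

Lemma expect_upd_diff_le pr ts F t D : (forall i j k, 0 <= pr i j k <= 1) -> ~ In t ts ->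
  (forall d, Rabs (F (upd d t true) - F (upd d t false)) <= D) ->
  forall d, Rabs (expect pr ts F (upd d t true) - expect pr ts F (upd d t false)) <= D.
Proof.
  intros Hpr Hn HD d. rewrite !expect_upd by exact Hn.
  replace (expect pr ts (fun d' => F (upd d' t true)) d - expect pr ts (fun d' => F (upd d' t false)) d)
    with (expect pr ts (fun d' => 1 * F (upd d' t true) + (-1) * F (upd d' t false)) d)
    by (rewrite expect_lin; ring).
  apply expect_abs_le; [exact Hpr|]. intros d'. replace (1 * F (upd d' t true) + -1 * F (upd d' t false))
    with (F (upd d' t true) - F (upd d' t false)) by ring. apply HD.
Qed.

Lemma prob_nonneg n pr E : (forall i j k, 0 <= pr i j k <= 1) -> 0 <= prob n pr E.
Proof.
  intros H. unfold prob.
  apply Rle_trans with (expect pr (triples n) (fun _ => 0) (fun _ _ _ => false)).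
  - right; symmetry; apply expect_const.
  - apply expect_mono; [exact H|]. intros d. destruct (E d); lra.
Qed.

Lemma exp_le_quadratic x : - 1 / 2 <= x <= 1 / 2 -> exp x <= 1 + x + 2 * x ^ 2.
Proof.
  intros Hx. pose proof (exp_ineq1_le (- x)) as H. rewrite exp_Ropp in H.
  pose proof (exp_pos x).
  assert (exp x * (1 - x) <= 1).
  { apply Rmult_le_compat_l with (r := exp x) in H; [|lra]. rewrite Rinv_r in H by lra. lra. }
  nra.
Qed.

Lemma mgf_two_point p g0 D Dl lam : 0 <= p <= 1 -> Rabs D <= Dl -> 0 <= lam ->
  (p < 1 -> lam * Dl <= 1 / 2) ->
  p * exp (lam * (g0 + D)) + (1 - p) * exp (lam * g0)
  <= exp (lam * (g0 + p * D) + 2 * lam ^ 2 * (p * (1 - p) * Dl ^ 2)).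
Proof.
  intros Hp HD Hl Hc.
  replace (lam * (g0 + D)) with (lam * (g0 + p * D) + lam * (1 - p) * D) by ring.
  replace (lam * g0) with (lam * (g0 + p * D) + - (lam * p * D)) by ring.
  rewrite !exp_plus. pose proof (exp_pos (lam * (g0 + p * D))).
  enough (p * exp (lam * (1 - p) * D) + (1 - p) * exp (- (lam * p * D))
          <= exp (2 * lam ^ 2 * (p * (1 - p) * Dl ^ 2))) by nra.
  destruct (Req_dec p 1) as [->|Hp1].
  { replace (lam * (1 - 1) * D) with 0 by ring.
    replace (2 * lam ^ 2 * (1 * (1 - 1) * Dl ^ 2)) with 0 by ring. rewrite exp_0. lra. }
  assert (HlD : - (1 / 2) <= lam * D <= 1 / 2).
  { apply Rabs_le_bounds. rewrite Rabs_mult, Rabs_pos_eq by lra.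
    apply Rle_trans with (lam * Dl); [apply Rmult_le_compat_l; lra | apply Hc; lra]. }
  pose proof (exp_le_quadratic (lam * (1 - p) * D) ltac:(nra)).
  pose proof (exp_le_quadratic (- (lam * p * D)) ltac:(nra)).
  pose proof (exp_ineq1_le (2 * lam ^ 2 * (p * (1 - p) * Dl ^ 2))).
  assert (D ^ 2 <= Dl ^ 2) by (pose proof (Rabs_le_bounds _ _ HD); nra).
  assert (lam ^ 2 * (p * (1 - p)) * D ^ 2 <= lam ^ 2 * (p * (1 - p)) * Dl ^ 2)
    by (apply Rmult_le_compat_l; [apply Rmult_le_pos|]; nra).
  nra.
Qed.

Fixpoint lsum (g : nat * nat * nat -> R) (ts : list (nat * nat * nat)) : R :=
  match ts with [] => 0 | t :: ts' => g t + lsum g ts' end.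

Lemma lsum_ext g h ts : (forall t, g t = h t) -> lsum g ts = lsum h ts.
Proof. intros H; induction ts as [|t ts IH]; simpl; [reflexivity|]. now rewrite IH, H. Qed.

Definition vterm (pr D : nat -> nat -> nat -> R) (t : nat * nat * nat) : R :=
  let '(i, j, k) := t in pr i j k * (1 - pr i j k) * D i j k ^ 2.

(* Bounded differences with variance proxy: the Doob martingale of [F] along [ts]
   is peeled off one coordinate at a time with [mgf_two_point]. *)
Lemma expect_exp_le pr F D lam ts : (forall i j k, 0 <= pr i j k <= 1) -> 0 <= lam -> NoDup ts ->
  (forall i j k, In (i, j, k) ts ->
     forall d, Rabs (F (upd d (i, j, k) true) - F (upd d (i, j, k) false)) <= D i j k) ->
  (forall i j k, In (i, j, k) ts -> pr i j k < 1 -> lam * D i j k <= 1 / 2) ->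
  forall d, expect pr ts (fun d => exp (lam * F d)) d
            <= exp (lam * expect pr ts F d + 2 * lam ^ 2 * lsum (vterm pr D) ts).
Proof.
  intros Hpr Hl. induction ts as [|[[i j] k] ts IH]; intros Hnd HD Hc d.
  { simpl. right. f_equal. ring. }
  inversion Hnd as [|? ? Hnotin Hnd']; subst. rewrite !expect_cons.
  assert (IH' : forall d, expect pr ts (fun d => exp (lam * F d)) d
                 <= exp (lam * expect pr ts F d + 2 * lam ^ 2 * lsum (vterm pr D) ts))
    by (apply IH; auto; intros; [apply HD | apply Hc]; simpl; auto).
  pose proof (IH' (upd d (i, j, k) true)) as H1. pose proof (IH' (upd d (i, j, k) false)) as H0.
  set (g1 := expect pr ts F (upd d (i, j, k) true)) in *.
  set (g0 := expect pr ts F (upd d (i, j, k) false)) in *.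
  set (V := lsum (vterm pr D) ts) in *.
  assert (Hdiff : Rabs (g1 - g0) <= D i j k)
    by (apply expect_upd_diff_le; auto; apply HD; left; reflexivity).
  pose proof (mgf_two_point (pr i j k) g0 (g1 - g0) (D i j k) lam (Hpr i j k) Hdiff Hl
                (Hc i j k (or_introl eq_refl))) as Hstep.
  replace (g0 + (g1 - g0)) with g1 in Hstep by ring.
  rewrite !exp_plus in H1, H0. pose proof (exp_pos (2 * lam ^ 2 * V)). pose proof (Hpr i j k).
  apply Rle_trans with
    (exp (2 * lam ^ 2 * V) * (pr i j k * exp (lam * g1) + (1 - pr i j k) * exp (lam * g0))).
  { nra. }
  apply Rle_trans with (exp (2 * lam ^ 2 * V) *
    exp (lam * (g0 + pr i j k * (g1 - g0)) + 2 * lam ^ 2 * (pr i j k * (1 - pr i j k) * D i j k ^ 2))).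
  { apply Rmult_le_compat_l; lra. }
  rewrite <- exp_plus. right. f_equal.
  change (lsum (vterm pr D) ((i, j, k) :: ts)) with (vterm pr D (i, j, k) + V). unfold vterm. ring.
Qed.

Lemma prob_tail_bound pr F D lam t ts d : (forall i j k, 0 <= pr i j k <= 1) -> 0 <= lam -> NoDup ts ->
  (forall i j k, In (i, j, k) ts ->
     forall d, Rabs (F (upd d (i, j, k) true) - F (upd d (i, j, k) false)) <= D i j k) ->
  (forall i j k, In (i, j, k) ts -> pr i j k < 1 -> lam * D i j k <= 1 / 2) ->
  expect pr ts (fun d => if Rle_dec (F d) t then 1 else 0) d
  >= 1 - exp (- (lam * t) + lam * expect pr ts F d + 2 * lam ^ 2 * lsum (vterm pr D) ts).
Proof.
  intros Hpr Hl Hnd HD Hc.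
  eapply Rge_trans; [exact (expect_indicator_ge pr Hpr ts F t lam d Hl)|]. apply Rle_ge.
  rewrite Rplus_assoc, exp_plus. pose proof (exp_pos (- (lam * t))).
  pose proof (expect_exp_le pr F D lam ts Hpr Hl Hnd HD Hc d). nra.
Qed.

Definition triple_eqb (t t' : nat * nat * nat) : bool :=
  let '(i, j, k) := t in let '(i', j', k') := t' in (Nat.eqb i i' && Nat.eqb j j' && Nat.eqb k k')%bool.

Definition tmem (t : nat * nat * nat) (ts : list (nat * nat * nat)) : bool := existsb (triple_eqb t) ts.

Lemma tmem_In t ts : tmem t ts = true <-> In t ts.
Proof.
  unfold tmem. rewrite existsb_exists.
  assert (Heq : forall t', triple_eqb t t' = true <-> t = t').
  { intros t'. destruct t as [[i j] k], t' as [[i' j'] k']; simpl.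
    rewrite !Bool.andb_true_iff, !Nat.eqb_eq. split; [intros [[-> ->] ->]; reflexivity|].
    intros H; injection H; auto. }
  split; [intros [t' [Ht' Ht]]; apply Heq in Ht; subst; assumption|].
  intros H; exists t; split; [assumption | apply Heq; reflexivity].
Qed.

(* [lin_stat n pr v ts d i] is the conditional expectation of [lin_stat n pr v [] d i]
   once the coordinates listed in [ts] are integrated out. *)
Definition mixed_outcome (pr : nat -> nat -> nat -> R) ts (d : outcome) i j k : R :=
  if tmem (i, j, k) ts then pr i j k else b2r (d i j k).

Definition lin_stat n pr (v : nat -> nat -> nat -> R) ts d i : R :=
  sumn n (fun j => sumn n (fun k => mixed_outcome pr ts d i j k * v i j k)).

Lemma lin_stat_upd n pr v ts i0 j0 k0 x d i : (j0 < n)%nat -> (k0 < n)%nat -> ~ In (i0, j0, k0) ts ->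
  lin_stat n pr v ts (upd d (i0, j0, k0) x) i =
  lin_stat n pr v ((i0, j0, k0) :: ts) d i
  + (if Nat.eqb i i0 then (b2r x - pr i0 j0 k0) * v i0 j0 k0 else 0).
Proof.
  intros Hj Hk Hn. unfold lin_stat.
  rewrite <- (sumn2_delta n j0 k0 (if Nat.eqb i i0 then (b2r x - pr i0 j0 k0) * v i0 j0 k0 else 0))
    by assumption.
  assert (Hm : tmem (i0, j0, k0) ts = false)
    by (destruct (tmem (i0, j0, k0) ts) eqn:E; [apply tmem_In in E; contradiction | reflexivity]).
  apply sumn_ext; intros j _; apply sumn_ext; intros k _.
  unfold mixed_outcome, upd, tmem; simpl existsb; fold (tmem (i, j, k) ts).
  destruct (Nat.eqb_spec i i0), (Nat.eqb_spec j j0), (Nat.eqb_spec k k0); simpl; subst;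
    try rewrite Hm; try ring; destruct (tmem _ ts); ring.
Qed.

(* Pythagoras: the Bernoulli steps are independent and centred. *)
Lemma expect_sumsq_lin_stat n pr v ts : NoDup ts ->
  (forall i j k, In (i, j, k) ts -> (i < n /\ j < n /\ k < n)%nat) -> forall d,
  expect pr ts (fun d => sumn n (fun i => lin_stat n pr v [] d i ^ 2)) d =
  sumn n (fun i => lin_stat n pr v ts d i ^ 2) + lsum (vterm pr v) ts.
Proof.
  induction ts as [|[[i0 j0] k0] ts IH]; intros Hnd Hr d; [simpl; ring|].
  inversion Hnd as [|? ? Hnotin Hnd']; subst. rewrite expect_cons.
  destruct (Hr i0 j0 k0 (or_introl eq_refl)) as [Hi [Hj Hk]].
  rewrite !IH by (auto; intros; apply Hr; simpl; auto).
  assert (Hupd : forall x, sumn n (fun i => lin_stat n pr v ts (upd d (i0, j0, k0) x) i ^ 2)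
    = sumn n (fun i => lin_stat n pr v ((i0, j0, k0) :: ts) d i ^ 2)
      + (2 * lin_stat n pr v ((i0, j0, k0) :: ts) d i0 * ((b2r x - pr i0 j0 k0) * v i0 j0 k0)
         + ((b2r x - pr i0 j0 k0) * v i0 j0 k0) ^ 2)).
  { intros x. rewrite <- sumsq_add_delta by exact Hi.
    apply sumn_ext; intros i _. now rewrite lin_stat_upd. }
  rewrite !Hupd.
  change (lsum (vterm pr v) ((i0, j0, k0) :: ts)) with (vterm pr v (i0, j0, k0) + lsum (vterm pr v) ts).
  unfold vterm, b2r. ring.
Qed.

Lemma lsum_app g l1 l2 : lsum g (l1 ++ l2) = lsum g l1 + lsum g l2.
Proof. induction l1 as [|t l1 IH]; simpl; [ring|]. rewrite IH; ring. Qed.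

Lemma lsum_flat_map_seq g (f : nat -> list (nat * nat * nat)) n :
  lsum g (flat_map f (seq 0 n)) = sumn n (fun i => lsum g (f i)).
Proof.
  induction n as [|n IH]; [reflexivity|].
  rewrite seq_S, flat_map_app, lsum_app, IH. simpl. rewrite app_nil_r. reflexivity.
Qed.

Lemma lsum_map_seq g (f : nat -> nat * nat * nat) n :
  lsum g (map f (seq 0 n)) = sumn n (fun k => g (f k)).
Proof.
  induction n as [|n IH]; [reflexivity|].
  rewrite seq_S, map_app, lsum_app, IH. simpl. ring.
Qed.

Lemma lsum_triples n g :
  lsum g (triples n) = sumn n (fun i => sumn n (fun j => sumn n (fun k => g (i, j, k)))).
Proof.
  unfold triples. rewrite lsum_flat_map_seq. apply sumn_ext; intros i _.
  rewrite lsum_flat_map_seq. apply sumn_ext; intros j _. apply lsum_map_seq.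
Qed.

Lemma In_triples n i j k : In (i, j, k) (triples n) <-> (i < n /\ j < n /\ k < n)%nat.
Proof.
  unfold triples. rewrite in_flat_map. split.
  - intros [i' [Hi' H]]. rewrite in_flat_map in H. destruct H as [j' [Hj' H]].
    rewrite in_map_iff in H. destruct H as [k' [E Hk']]. injection E as -> -> ->.
    apply in_seq in Hi', Hj', Hk'. lia.
  - intros (Hi & Hj & Hk). exists i; split; [apply in_seq; lia|]. rewrite in_flat_map.
    exists j; split; [apply in_seq; lia|]. rewrite in_map_iff. exists k; split; [reflexivity|].
    apply in_seq; lia.
Qed.

Lemma NoDup_flat_map_disjoint {A B} (f : A -> list B) l : NoDup l -> (forall x, NoDup (f x)) ->
  (forall x y z, In z (f x) -> In z (f y) -> x = y) -> NoDup (flat_map f l).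
Proof.
  intros Hl Hf Hd. induction l as [|x l IH]; simpl; [constructor|].
  inversion Hl as [|? ? Hx Hl']; subst. apply NoDup_app; auto.
  intros z Hz Hz'. apply in_flat_map in Hz'. destruct Hz' as [y [Hy Hz']].
  rewrite (Hd x y z Hz Hz') in Hx. contradiction.
Qed.

Lemma NoDup_triples n : NoDup (triples n).
Proof.
  unfold triples. apply NoDup_flat_map_disjoint; [apply seq_NoDup| |].
  - intros i. apply NoDup_flat_map_disjoint; [apply seq_NoDup| |].
    + intros j. apply NoDup_map_NoDup_ForallPairs; [|apply seq_NoDup].
      intros x y _ _ H; injection H; auto.
    + intros x y z H1 H2. apply in_map_iff in H1, H2.
      destruct H1 as [? [<- _]], H2 as [? [E _]]. injection E; auto.
  - intros x y z H1 H2. apply in_flat_map in H1, H2.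
    destruct H1 as [? [_ H1]], H2 as [? [_ H2]]. apply in_map_iff in H1, H2.
    destruct H1 as [? [<- _]], H2 as [? [E _]]. injection E; auto.
Qed.

Definition ipw (p : R) : R := if Rlt_dec 0 p then / p else 0.

Lemma Rmin_lt_1 y : Rmin y 1 < 1 -> Rmin y 1 = y.
Proof. unfold Rmin; destruct (Rle_dec y 1); lra. Qed.

Section InverseProbabilityWeight.
Variables num K : R.
Hypothesis K_pos : 0 < K.
Hypothesis num_nonneg : 0 <= num.
Let p := Rmin (num / K) 1.

Lemma ipw_range : 0 <= p <= 1.
Proof.
  split; [|apply Rmin_r]. unfold p, Rmin. destruct (Rle_dec _ _); [|lra].
  apply Rle_mult_inv_pos; lra.
Qed.

Lemma ipw_interior : 0 < p < 1 -> 0 < num /\ ipw p = K / num.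
Proof.
  intros Hp. assert (Hpe : p = num / K) by (apply Rmin_lt_1, Hp).
  assert (0 < num) by (destruct num_nonneg as [|<-]; [assumption|]; unfold Rdiv in Hpe; lra).
  split; [assumption|]. unfold ipw. destruct (Rlt_dec 0 p); [|lra]. rewrite Hpe. field; lra.
Qed.

Lemma ipw_unbiased x : (num = 0 -> x = 0) -> p * (ipw p * x) = x.
Proof.
  intros Hx. unfold ipw. destruct (Rlt_dec 0 p) as [Hp|Hp]; [field; lra|].
  assert (Hp0 : p = 0) by (pose proof ipw_range; lra).
  assert (num = 0).
  { unfold p, Rmin in Hp0. destruct (Rle_dec _ _); [|lra].
    apply Rmult_integral in Hp0 as [|Hinv]; [assumption|].
    pose proof (Rinv_0_lt_compat K K_pos); lra. }
  rewrite Hx by assumption. ring.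
Qed.

(* As [p] is linear in [num], the variance only needs [x^2 <= L num]; the [pow32]
   weights are chosen so that this holds (see [sq_prod2_le]). *)
Lemma ipw_variance_le x L : 0 <= L -> x ^ 2 <= L * num ->
  p * (1 - p) * (ipw p * x) ^ 2 <= L * K.
Proof.
  intros HL Hx. pose proof ipw_range.
  destruct (Req_dec p 0) as [Hp0|Hp0]; [rewrite Hp0; nra|].
  destruct (Req_dec p 1) as [Hp1|Hp1]; [rewrite Hp1; nra|].
  destruct (ipw_interior ltac:(lra)) as [Hnum ->].
  assert (Hpe : p = num / K) by (apply Rmin_lt_1; fold p; lra).
  replace (p * (1 - p) * (K / num * x) ^ 2) with ((1 - p) * (x ^ 2 / num) * K) by (rewrite Hpe; field; lra).
  apply Rmult_le_compat_r; [lra|].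
  assert (x ^ 2 / num <= L) by (apply Rmult_le_reg_r with num; [lra|]; unfold Rdiv;
    rewrite Rmult_assoc, Rinv_l, Rmult_1_r; lra).
  pose proof (pow2_ge_0 x). assert (0 <= x ^ 2 / num) by (apply Rle_mult_inv_pos; lra). nra.
Qed.

Lemma ipw_abs_le x L : 0 <= L -> Rabs x <= L * num -> p < 1 -> Rabs (ipw p * x) <= L * K.
Proof.
  intros HL Hx Hp1. pose proof ipw_range.
  destruct (Req_dec p 0) as [Hp0|Hp0].
  { unfold ipw. destruct (Rlt_dec 0 p); [lra|]. rewrite Rmult_0_l, Rabs_R0. nra. }
  destruct (ipw_interior ltac:(lra)) as [Hnum ->].
  rewrite Rabs_mult, Rabs_pos_eq by (apply Rle_mult_inv_pos; lra).
  replace (L * K) with (K / num * (L * num)) by (field; lra).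
  apply Rmult_le_compat_l; [apply Rle_mult_inv_pos|]; lra.
Qed.

End InverseProbabilityWeight.

Lemma sq_le_pow32 x : 0 <= x <= 1 -> x ^ 2 <= pow32 x.
Proof.
  intros Hx. unfold pow32. pose proof (sqrt_sqrt x (proj1 Hx)). pose proof (sqrt_pos x).
  set (y := sqrt x) in *. rewrite <- H.
  assert (y <= 1) by nra. assert (0 <= y * y * y) by (apply Rmult_le_pos; nra). nra.
Qed.

Lemma pow32_nonneg x : 0 <= x -> 0 <= pow32 x.
Proof. intros; unfold pow32; apply Rmult_le_pos; [assumption | apply sqrt_pos]. Qed.

Definition pow32_sym (x y z : R) : R := pow32 x * pow32 y + pow32 y * pow32 z + pow32 z * pow32 x.

Lemma pow32_sym_nonneg x y z : 0 <= x -> 0 <= y -> 0 <= z -> 0 <= pow32_sym x y z.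
Proof.
  intros. unfold pow32_sym.
  pose proof (pow32_nonneg x). pose proof (pow32_nonneg y). pose proof (pow32_nonneg z). nra.
Qed.

Lemma amgm3 x y z : 0 <= x -> 0 <= y -> 0 <= z -> 3 * (x * y * z) <= x ^ 3 + y ^ 3 + z ^ 3.
Proof.
  intros. assert (0 <= (x + y + z) * ((x - y) ^ 2 + (y - z) ^ 2 + (z - x) ^ 2)).
  { apply Rmult_le_pos; [lra|]. pose proof (pow2_ge_0 (x - y)). pose proof (pow2_ge_0 (y - z)).
    pose proof (pow2_ge_0 (z - x)). lra. }
  nra.
Qed.

(* AM-GM applied to [sqrt (x y)], [sqrt (y z)], [sqrt (z x)]. *)
Lemma prod_le_pow32_sym x y z : 0 <= x -> 0 <= y -> 0 <= z -> 3 * (x * y * z) <= pow32_sym x y z.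
Proof.
  intros Hx Hy Hz. unfold pow32_sym, pow32.
  rewrite <- (sqrt_sqrt x Hx), <- (sqrt_sqrt y Hy), <- (sqrt_sqrt z Hz) at 1.
  pose proof (sqrt_pos x). pose proof (sqrt_pos y). pose proof (sqrt_pos z).
  set (u := sqrt x) in *. set (v := sqrt y) in *. set (w := sqrt z) in *.
  rewrite <- (sqrt_sqrt x Hx), <- (sqrt_sqrt y Hy), <- (sqrt_sqrt z Hz). fold u v w.
  pose proof (amgm3 (u * v) (v * w) (w * u) ltac:(nra) ltac:(nra) ltac:(nra)). nra.
Qed.

Lemma abs_prod3_le x y z u1 u2 u3 : 0 <= x -> 0 <= y -> 0 <= z ->
  Rabs u1 <= 2 * x -> Rabs u2 <= 2 * y -> Rabs u3 <= 2 * z ->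
  Rabs (u1 * u2 * u3) <= 8 / 3 * pow32_sym x y z.
Proof.
  intros Hx Hy Hz H1 H2 H3. pose proof (prod_le_pow32_sym x y z Hx Hy Hz).
  rewrite !Rabs_mult.
  assert (Rabs u1 * Rabs u2 <= 2 * x * (2 * y)) by (apply Rmult_le_compat; auto using Rabs_pos).
  assert (Rabs u1 * Rabs u2 * Rabs u3 <= 2 * x * (2 * y) * (2 * z))
    by (apply Rmult_le_compat; auto using Rabs_pos; apply Rmult_le_pos; apply Rabs_pos).
  lra.
Qed.

Lemma sq_prod2_le x y z u2 u3 : 0 <= x -> 0 <= y <= 1 -> 0 <= z <= 1 ->
  Rabs u2 <= 2 * y -> Rabs u3 <= 2 * z -> (u2 * u3) ^ 2 <= 16 * pow32_sym x y z.
Proof.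
  intros Hx Hy Hz H2 H3. apply Rabs_le_bounds in H2, H3.
  pose proof (sq_le_pow32 y Hy). pose proof (sq_le_pow32 z Hz).
  pose proof (pow32_nonneg x Hx).
  pose proof (pow32_nonneg y (proj1 Hy)). pose proof (pow32_nonneg z (proj1 Hz)).
  assert (u2 ^ 2 <= 4 * pow32 y) by nra. assert (u3 ^ 2 <= 4 * pow32 z) by nra.
  assert (u2 ^ 2 * u3 ^ 2 <= 4 * pow32 y * (4 * pow32 z)) by (apply Rmult_le_compat; auto using pow2_ge_0).
  unfold pow32_sym. nra.
Qed.

Lemma rownorm_nonneg r M i : 0 <= rownorm r M i.
Proof. apply sqrt_pos. Qed.

Lemma Sconst_nonneg n r M : 0 <= Sconst n r M.
Proof. apply sumn_nonneg. intros; apply pow32_nonneg, rownorm_nonneg. Qed.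

Lemma phat_range n r Ustar m i j k : 0 <= phat n r Ustar m i j k <= 1.
Proof.
  split; [|apply Rmin_r]. unfold phat, Rmin. destruct (Rle_dec _ _); [|lra].
  apply Rmult_le_pos; [apply pos_INR|]. unfold p_ijk. apply Rmult_le_pos.
  - apply (pow32_sym_nonneg (rownorm r Ustar i) (rownorm r Ustar j) (rownorm r Ustar k));
      apply rownorm_nonneg.
  - destruct (Req_dec (3 * INR n * Sconst n r Ustar ^ 2) 0) as [->|Hz].
    + rewrite Rinv_0; lra.
    + left; apply Rinv_0_lt_compat.
      pose proof (pos_INR n). pose proof (pow2_ge_0 (Sconst n r Ustar)). nra.
Qed.

Lemma sumsq_gram_row n r M i0 : orthonormal_cols n r M ->
  sumn n (fun i => sumn r (fun l => M i0 l * M i l) ^ 2) = sumn r (fun l => M i0 l ^ 2).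
Proof.
  intros Ho.
  transitivity (sumn r (fun l => sumn r (fun l' => M i0 l * M i0 l' * (if Nat.eqb l l' then 1 else 0)))).
  - rewrite (sumn_ext n _
      (fun i => sumn r (fun l => sumn r (fun l' => M i0 l * M i l * (M i0 l' * M i l')))))
      by (intros; rewrite sumn_mul_sumn; ring).
    rewrite sumn_swap. apply sumn_ext; intros l Hl. rewrite sumn_swap. apply sumn_ext; intros l' Hl'.
    rewrite <- (Ho l l' Hl Hl'). unfold inner. rewrite <- sumn_scal. apply sumn_ext; intros; ring.
  - apply sumn_ext; intros l Hl.
    rewrite (sumn_ext r _ (fun l' => if Nat.eqb l' l then M i0 l ^ 2 else 0)) by
      (intros l' _; destruct (Nat.eqb_spec l l'), (Nat.eqb_spec l' l); subst; try lia; ring).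
    apply sumn_delta; assumption.
Qed.

(* Expand [0 <= |e_i0 - M M^T e_i0|^2] using orthonormality. *)
Lemma rownorm_le_1 n r M i0 : orthonormal_cols n r M -> (i0 < n)%nat -> rownorm r M i0 <= 1.
Proof.
  intros Ho Hi. unfold rownorm, vnorm. rewrite <- sqrt_1. apply sqrt_le_1_alt.
  set (R2 := sumn r (fun l => M i0 l ^ 2)).
  set (x := fun i => sumn r (fun l => M i0 l * M i l)).
  assert (Hx0 : x i0 = R2) by (apply sumn_ext; intros; ring).
  pose proof (sumsq_nonneg n (fun i => (if Nat.eqb i i0 then 1 else 0) - x i)) as H0.
  rewrite (sumn_ext n _ (fun i => (if Nat.eqb i i0 then 1 - 2 * x i0 else 0) + x i ^ 2)) in H0
    by (intros i _; destruct (Nat.eqb_spec i i0) as [->|]; ring).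
  rewrite sumn_add, sumn_delta, Hx0 in H0 by exact Hi.
  unfold x in H0. rewrite (sumsq_gram_row n r M i0 Ho) in H0. fold R2 in H0. lra.
Qed.

Lemma pow32_eq_0 x : 0 <= x -> pow32 x = 0 -> x = 0.
Proof.
  intros Hx H. apply Rmult_integral in H as [H|H]; [exact H|]. apply sqrt_eq_0; assumption.
Qed.

Lemma ln_ge_half n : (2 <= n)%nat -> 1 / 2 <= ln (INR n).
Proof.
  intros Hn.
  assert (Hl2 : 1 / 2 < ln 2).
  { rewrite <- (ln_exp (1 / 2)). apply ln_increasing; [apply exp_pos|].
    assert (exp (1 / 2) * exp (1 / 2) = exp 1) by (rewrite <- exp_plus; f_equal; lra).
    pose proof exp_le_3. pose proof (exp_pos (1 / 2)). nra. }
  apply le_INR in Hn. replace (INR 2) with 2 in Hn by (simpl; ring).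
  destruct Hn as [Hn|<-]; [|lra]. pose proof (ln_increasing 2 (INR n) ltac:(lra) Hn). lra.
Qed.

Lemma exp_neg_10_ln n : (0 < n)%nat -> exp (- (10 * ln (INR n))) = / INR n ^ 10.
Proof.
  intros Hn. apply lt_0_INR in Hn. rewrite exp_Ropp.
  replace (10 * ln (INR n)) with (ln (INR n ^ 10)) by (rewrite ln_pow by exact Hn; simpl; ring).
  rewrite exp_ln by (apply pow_lt; exact Hn). reflexivity.
Qed.

Lemma exp_le_compat x y : x <= y -> exp x <= exp y.
Proof. intros [H | ->]; [left; apply exp_increasing, H | right; reflexivity]. Qed.

(* The choice [lam = g / (256 M s)] balances the linear and quadratic terms of the exponent. *)
Lemma chernoff_exponent_le M s g mu V L : 0 < M -> 0 < s -> 0 < g -> 0 <= L ->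
  mu <= s * g / 4 -> V <= 48 * M * s ^ 2 -> M * (8192 * L) <= g ^ 2 ->
  let lam := g / (256 * M * s) in - (lam * (g * s)) + lam * mu + 2 * lam ^ 2 * V <= - (10 * L).
Proof.
  intros HM Hs Hg HL Hmu HV Hgap lam.
  assert (Hlam : 0 < lam) by (apply Rdiv_pos_pos; [|apply Rmult_lt_0_compat]; lra).
  assert (lam * mu <= lam * (s * g / 4)) by (apply Rmult_le_compat_l; lra).
  assert (2 * lam ^ 2 * V <= 2 * lam ^ 2 * (48 * M * s ^ 2)) by (apply Rmult_le_compat_l; nra).
  assert (Hid : - (lam * (g * s)) + lam * (s * g / 4) + 2 * lam ^ 2 * (48 * M * s ^ 2)
                = - (3 / 2048) * (g ^ 2 / M))
    by (unfold lam; field; lra).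
  assert (8192 * L <= g ^ 2 / M)
    by (apply Rmult_le_reg_r with M; [lra|]; replace (g ^ 2 / M * M) with (g ^ 2) by (field; lra); lra).
  lra.
Qed.

Section Model.
Variables (n r : nat) (Ustar U : nat -> nat -> R) (q : nat) (a b c : nat -> R) (m : nat).
Hypothesis Ustar_orth : orthonormal_cols n r Ustar.
Hypothesis Uq_unit : vnorm n (fun i => U i q) = 1.
Hypothesis Uq_bound : forall j, (j < n)%nat -> Rabs (U j q) <= 2 * rownorm r Ustar j.
Hypothesis a_unit : vnorm n a = 1.
Hypothesis b_unit : vnorm n b = 1.
Hypothesis c_unit : vnorm n c = 1.
Hypothesis c_bound : forall i, (i < n)%nat -> Rabs (c i) <= 2 * rownorm r Ustar i.

Let rho := rownorm r Ustar.
Let S := Sconst n r Ustar.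
Let ph := phat n r Ustar m.
Let M := INR n * S ^ 2 / INR m.
Let al := inner n (fun j => U j q) a.
Let be := inner n (fun j => U j q) b.
Let s := sqrt (1 - al ^ 2 * be ^ 2).
Let e j k := al * be * U j q * U k q - a j * b k.
Let coef i j k := c i * U j q * U k q * e j k.
Let v i j k := Wgt n r Ustar m i j k * coef i j k.
Let dev d := vnorm n (lin_stat n ph v [] d).

Lemma rho_range i : (i < n)%nat -> 0 <= rho i <= 1.
Proof. intros Hi. split; [apply rownorm_nonneg | apply (rownorm_le_1 n); assumption]. Qed.

Lemma Sconst_pos : 0 < S.
Proof.
  destruct (Sconst_nonneg n r Ustar) as [|HS]; [assumption|]. exfalso.
  assert (Hz : forall i, (i < n)%nat -> U i q = 0).
  { intros i Hi.
    assert (pow32 (rho i) <= S)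
      by (apply (sumn_term_le n (fun i => pow32 (rho i))); auto;
          intros; apply pow32_nonneg, rownorm_nonneg).
    pose proof (pow32_nonneg (rho i) (rownorm_nonneg r Ustar i)).
    assert (Hr : rho i = 0) by (apply pow32_eq_0; [apply rownorm_nonneg | fold S in HS; lra]).
    pose proof (Rabs_le_bounds _ _ (Uq_bound i Hi)) as Hb. fold rho in Hb. lra. }
  pose proof Uq_unit as H. unfold vnorm in H.
  rewrite (sumn_ext n _ (fun _ => 0)), sumn_zero, sqrt_0 in H
    by (intros i Hi; rewrite Hz; [ring|assumption]).
  lra.
Qed.

Lemma n_pos : 0 < INR n.
Proof.
  pose proof Sconst_pos as HS. destruct n as [|n']; [unfold S, Sconst in HS; simpl in HS; lra|].
  apply lt_0_INR; lia.
Qed.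

Hypothesis m_pos : 0 < INR m.

Lemma M_pos : 0 < M.
Proof.
  pose proof Sconst_pos. pose proof n_pos. apply Rdiv_pos_pos; [apply Rmult_lt_0_compat|]; nra.
Qed.

Lemma phat_eq i j k : ph i j k = Rmin (pow32_sym (rho i) (rho j) (rho k) / (3 * M)) 1.
Proof.
  pose proof Sconst_pos. pose proof n_pos.
  unfold ph, phat, p_ijk, M. f_equal. fold S. unfold pow32_sym, rho. field. split; lra.
Qed.

Lemma v_unbiased i j k : (i < n)%nat -> (j < n)%nat -> (k < n)%nat -> ph i j k * v i j k = coef i j k.
Proof.
  intros Hi Hj Hk. pose proof M_pos.
  unfold v. change (Wgt n r Ustar m i j k) with (ipw (ph i j k)). rewrite phat_eq.
  apply ipw_unbiased; [lra | apply pow32_sym_nonneg; apply rho_range; assumption|].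
  intros Hnum. pose proof (abs_prod3_le (rho i) (rho j) (rho k) (c i) (U j q) (U k q)
    (proj1 (rho_range i Hi)) (proj1 (rho_range j Hj)) (proj1 (rho_range k Hk))
    (c_bound i Hi) (Uq_bound j Hj) (Uq_bound k Hk)) as Hb.
  rewrite Hnum, Rmult_0_r in Hb. pose proof (Rabs_pos (c i * U j q * U k q)).
  unfold coef. replace (c i * U j q * U k q) with 0; [ring|].
  destruct (Rabs_le_bounds _ _ Hb). lra.
Qed.

Lemma v_variance_le i j k : (i < n)%nat -> (j < n)%nat -> (k < n)%nat ->
  ph i j k * (1 - ph i j k) * v i j k ^ 2 <= 48 * M * c i ^ 2 * e j k ^ 2.
Proof.
  intros Hi Hj Hk. pose proof M_pos.
  unfold v. change (Wgt n r Ustar m i j k) with (ipw (ph i j k)). rewrite phat_eq.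
  replace (48 * M * c i ^ 2 * e j k ^ 2) with (16 * c i ^ 2 * e j k ^ 2 * (3 * M)) by ring.
  apply ipw_variance_le; [lra | apply pow32_sym_nonneg; apply rho_range; assumption | nra |].
  pose proof (sq_prod2_le (rho i) (rho j) (rho k) (U j q) (U k q) (proj1 (rho_range i Hi))
    (rho_range j Hj) (rho_range k Hk) (Uq_bound j Hj) (Uq_bound k Hk)).
  unfold coef.
  replace ((c i * U j q * U k q * e j k) ^ 2) with (c i ^ 2 * e j k ^ 2 * (U j q * U k q) ^ 2) by ring.
  apply Rle_trans with (c i ^ 2 * e j k ^ 2 * (16 * pow32_sym (rho i) (rho j) (rho k))); [|right; ring].
  apply Rmult_le_compat_l; [apply Rmult_le_pos; apply pow2_ge_0 | assumption].
Qed.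

Lemma v_abs_le i j k : (i < n)%nat -> (j < n)%nat -> (k < n)%nat ->
  ph i j k < 1 -> Rabs (v i j k) <= 8 * M * Rabs (e j k).
Proof.
  intros Hi Hj Hk Hp. pose proof M_pos. pose proof (Rabs_pos (e j k)).
  unfold v. change (Wgt n r Ustar m i j k) with (ipw (ph i j k)). rewrite phat_eq in *.
  replace (8 * M * Rabs (e j k)) with (8 / 3 * Rabs (e j k) * (3 * M)) by field.
  apply ipw_abs_le; [lra | apply pow32_sym_nonneg; apply rho_range; assumption | nra | | assumption].
  unfold coef. rewrite Rabs_mult.
  apply Rle_trans with (8 / 3 * pow32_sym (rho i) (rho j) (rho k) * Rabs (e j k)); [|right; ring].
  apply Rmult_le_compat_r; [assumption|]. apply abs_prod3_le; try apply rho_range; auto.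
Qed.

Lemma sumsq_unit f : vnorm n f = 1 -> sumn n (fun i => f i ^ 2) = 1.
Proof. intros H. rewrite <- vnorm_sq, H. ring. Qed.

Lemma sumsq_e : sumn n (fun j => sumn n (fun k => e j k ^ 2)) = s ^ 2.
Proof.
  assert (Hexp : sumn n (fun j => sumn n (fun k => e j k ^ 2)) = 1 - al ^ 2 * be ^ 2).
  { rewrite (sumn_ext n _ (fun j => sumn n (fun k => (al * be) ^ 2 * U j q ^ 2 * U k q ^ 2)
        - 2 * (al * be) * sumn n (fun k => U j q * a j * (U k q * b k))
        + sumn n (fun k => a j ^ 2 * b k ^ 2))).
    2:{ intros j _. rewrite <- sumn_scal, <- sumn_sub, <- sumn_add.
        apply sumn_ext; intros; unfold e; ring. }
    rewrite sumn_add, sumn_sub, sumn_scal, !sumn_mul_sumn, sumn_scal, !sumsq_unit by assumption.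
    fold (inner n (fun j => U j q) a) (inner n (fun j => U j q) b). fold al be. ring. }
  unfold s. rewrite pow2_sqrt; [exact Hexp|].
  rewrite <- Hexp. apply sumn_nonneg; intros; apply sumsq_nonneg.
Qed.

Lemma e_abs_le j k : (j < n)%nat -> (k < n)%nat -> Rabs (e j k) <= s.
Proof.
  intros Hj Hk. assert (e j k ^ 2 <= s ^ 2).
  { rewrite <- sumsq_e. apply Rle_trans with (sumn n (fun k => e j k ^ 2)).
    - apply (sumn_term_le n (fun k => e j k ^ 2)); auto; intros; apply pow2_ge_0.
    - apply (sumn_term_le n (fun j => sumn n (fun k => e j k ^ 2))); auto; intros; apply sumsq_nonneg. }
  assert (0 <= s) by apply sqrt_pos. apply Rabs_le. split; nra.
Qed.

Lemma good_event_dev gamma d :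
  good_event n r Ustar m U q a b c gamma d = if Rle_dec (dev d) (gamma * s) then true else false.
Proof.
  unfold good_event. cbv zeta. fold al be s.
  replace (vnorm n (fun i => (al * be * Bdiag n r Ustar m U q d i - Rdiag n r Ustar m U q a b d i) * c i))
    with (dev d); [reflexivity|].
  symmetry. apply vnorm_ext. intros i _. unfold lin_stat, mixed_outcome, Bdiag, Rdiag. simpl.
  rewrite <- sumn_scal, <- sumn_sub, Rmult_comm, <- sumn_scal. apply sumn_ext; intros j _.
  rewrite <- sumn_scal, <- sumn_sub, <- sumn_scal. apply sumn_ext; intros k _.
  unfold v, coef, e. ring.
Qed.

Lemma lin_stat_mean_zero d i : (i < n)%nat -> lin_stat n ph v (triples n) d i = 0.
Proof.
  intros Hi. unfold lin_stat.
  rewrite (sumn_ext n _ (fun j => sumn n (fun k => (c i * (al * be) * U j q ^ 2) * U k q ^ 2)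
                               - sumn n (fun k => (c i * (U j q * a j)) * (U k q * b k)))).
  - rewrite sumn_sub, !sumn_mul_sumn, !sumn_scal, sumsq_unit by assumption.
    fold (inner n (fun j => U j q) a) (inner n (fun j => U j q) b). fold al be. ring.
  - intros j Hj. rewrite <- sumn_sub. apply sumn_ext; intros k Hk.
    unfold mixed_outcome. rewrite (proj2 (tmem_In _ _)) by (apply In_triples; auto).
    rewrite v_unbiased by assumption. unfold coef, e. ring.
Qed.

Lemma expect_dev_sq d : expect ph (triples n) (fun d => dev d ^ 2) d = lsum (vterm ph v) (triples n).
Proof.
  rewrite (expect_ext ph (triples n) _ (fun d => sumn n (fun i => lin_stat n ph v [] d i ^ 2)))
    by (intros; apply vnorm_sq).
  rewrite expect_sumsq_lin_stat by (apply NoDup_triples || (intros; apply In_triples; assumption)).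
  rewrite (sumn_ext n _ (fun _ => 0)), sumn_zero by (intros; rewrite lin_stat_mean_zero; [ring|assumption]).
  ring.
Qed.

Lemma variance_le : lsum (vterm ph v) (triples n) <= 48 * M * s ^ 2.
Proof.
  rewrite lsum_triples.
  apply Rle_trans with (sumn n (fun i => sumn n (fun j => sumn n (fun k => 48 * M * c i ^ 2 * e j k ^ 2)))).
  - do 3 (apply sumn_le; intros). apply v_variance_le; assumption.
  - right. transitivity (sumn n (fun i => 48 * M * s ^ 2 * c i ^ 2)).
    + apply sumn_ext; intros i _. rewrite <- sumsq_e.
      transitivity (sumn n (fun j => 48 * M * c i ^ 2 * sumn n (fun k => e j k ^ 2))).
      * apply sumn_ext; intros. rewrite <- sumn_scal. apply sumn_ext; intros; ring.
      * rewrite sumn_scal; ring.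
    + rewrite sumn_scal, sumsq_unit by assumption; ring.
Qed.

Lemma dev_upd_diff_le i j k d : (i < n)%nat -> (j < n)%nat -> (k < n)%nat ->
  Rabs (dev (upd d (i, j, k) true) - dev (upd d (i, j, k) false)) <= Rabs (v i j k).
Proof.
  intros Hi Hj Hk. unfold dev.
  rewrite (vnorm_ext n (lin_stat n ph v [] (upd d (i, j, k) true))
    (fun i' => lin_stat n ph v [] (upd d (i, j, k) false) i' + (if Nat.eqb i' i then v i j k else 0))).
  - apply vnorm_add_delta_le; assumption.
  - intros i' _. rewrite !lin_stat_upd by auto. destruct (Nat.eqb i' i); simpl; ring.
Qed.

Lemma dev_eq_0 d : s = 0 -> dev d = 0.
Proof.
  intros Hs. unfold dev, vnorm.
  rewrite (sumn_ext n _ (fun _ => 0)), sumn_zero, sqrt_0; [reflexivity|].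
  intros i Hi. unfold lin_stat. rewrite (sumn_ext n _ (fun _ => 0)), sumn_zero; [ring|].
  intros j Hj. rewrite (sumn_ext n _ (fun _ => 0)), sumn_zero; [reflexivity|].
  intros k Hk. pose proof (e_abs_le j k Hj Hk) as He. rewrite Hs in He.
  unfold v, coef. replace (e j k) with 0 by (pose proof (Rabs_le_bounds _ _ He); lra). ring.
Qed.

Lemma prob_good_event_ge gamma : (2 <= n)%nat -> 0 < gamma <= 1 ->
  8192 * INR n * ln (INR n) * S ^ 2 <= gamma ^ 2 * INR m ->
  prob n ph (good_event n r Ustar m U q a b c gamma) >= 1 - / INR n ^ 10.
Proof.
  intros Hn Hg Hsize. pose proof M_pos. pose proof (ln_ge_half n Hn). pose proof Sconst_pos.
  pose proof (Rinv_0_lt_compat _ (pow_lt (INR n) 10 n_pos)).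
  assert (Hgap : M * (8192 * ln (INR n)) <= gamma ^ 2).
  { unfold M. apply Rmult_le_reg_r with (INR m); [exact m_pos|].
    replace (INR n * S ^ 2 / INR m * (8192 * ln (INR n)) * INR m) with (8192 * INR n * ln (INR n) * S ^ 2)
      by (field; lra). lra. }
  assert (Hph : forall i j k, 0 <= ph i j k <= 1) by (intros; apply phat_range).
  unfold prob. rewrite (expect_ext ph _ _ (fun d => if Rle_dec (dev d) (gamma * s) then 1 else 0))
    by (intros d; rewrite good_event_dev; destruct (Rle_dec _ _); reflexivity).
  destruct (Req_dec s 0) as [Hs|Hs].
  { rewrite (expect_ext ph _ _ (fun _ => 1)), expect_const; [lra|].
    intros d. rewrite dev_eq_0, Hs by exact Hs. destruct (Rle_dec 0 (gamma * 0)); [reflexivity|lra]. }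
  assert (Hs_pos : 0 < s) by (assert (0 <= s) by apply sqrt_pos; lra).
  set (lam := gamma / (256 * M * s)).
  assert (Hlam : 0 < lam) by (apply Rdiv_pos_pos; [|apply Rmult_lt_0_compat]; lra).
  eapply Rge_trans.
  { apply (prob_tail_bound ph dev (fun i j k => Rabs (v i j k)) lam); auto using NoDup_triples; [lra| |].
    - intros i j k Hin d. apply In_triples in Hin as (Hi & Hj & Hk). apply dev_upd_diff_le; assumption.
    - intros i j k Hin Hlt. apply In_triples in Hin as (Hi & Hj & Hk).
      apply Rle_trans with (lam * (8 * M * s)).
      + apply Rmult_le_compat_l; [lra|]. apply Rle_trans with (8 * M * Rabs (e j k)).
        * apply v_abs_le; assumption.
        * apply Rmult_le_compat_l; [lra | apply e_abs_le; assumption].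
      + unfold lam. replace (gamma / (256 * M * s) * (8 * M * s)) with (gamma / 32) by (field; lra). lra. }
  apply Rle_ge, Rplus_le_compat_l, Ropp_le_contravar. rewrite <- exp_neg_10_ln by lia.
  apply exp_le_compat, chernoff_exponent_le; try lra.
  - rewrite <- (sqrt_pow2 (s * gamma / 4)) by nra.
    eapply Rle_trans; [apply expect_le_sqrt_expect_sq; exact Hph|]. apply sqrt_le_1_alt.
    rewrite expect_dev_sq. eapply Rle_trans; [apply variance_le|]. nra.
  - rewrite (lsum_ext _ (vterm ph v)) by (intros [[i j] k]; unfold vterm; rewrite pow2_abs; reflexivity).
    apply variance_le.
Qed.

End Model.

Theorem mainTheorem7 :
  exists C : R, C > 0 /\
  forall (n r : nat) (Ustar U : nat -> nat -> R) (q : nat) (a b c : nat -> R)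
         (gamma : R) (m : nat),
    orthonormal_cols n r Ustar ->
    (forall l, (l < r)%nat -> vnorm n (fun i => U i l) = 1) ->
    (forall i l, (i < n)%nat -> (l < r)%nat -> Rabs (U i l) <= 2 * rownorm r Ustar i) ->
    (q < r)%nat ->
    vnorm n a = 1 -> vnorm n b = 1 -> vnorm n c = 1 ->
    (forall i, (i < n)%nat ->
       Rabs (a i) <= 2 * rownorm r Ustar i /\
       Rabs (b i) <= 2 * rownorm r Ustar i /\
       Rabs (c i) <= 2 * rownorm r Ustar i) ->
    0 < gamma <= 1 ->
    INR m >= C / gamma ^ 2 * INR n * ln (INR n) * (Sconst n r Ustar) ^ 2 ->
    prob n (phat n r Ustar m) (good_event n r Ustar m U q a b c gamma)
      >= 1 - / (INR n ^ 10).
Proof.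
  exists 8192. split; [lra|].
  intros n r Ustar U q a b c gamma m Ho HU HUb Hq Ha Hb Hc Habc Hg Hm.
  destruct (Nat.lt_ge_cases n 2) as [Hn|Hn].
  { destruct n as [|[|]]; [unfold vnorm in Ha; simpl in Ha; rewrite sqrt_0 in Ha; lra | |lia].
    replace (INR 1 ^ 10) with 1 by (simpl; ring). rewrite Rinv_1, Rminus_diag.
    apply Rle_ge, prob_nonneg. intros; apply phat_range. }
  assert (HUq : vnorm n (fun i => U i q) = 1) by (apply HU, Hq).
  assert (HUqb : forall j, (j < n)%nat -> Rabs (U j q) <= 2 * rownorm r Ustar j) by auto.
  pose proof (Sconst_pos n r Ustar U q HUq HUqb) as HS. pose proof (ln_ge_half n Hn) as Hln.
  assert (Hsize : 8192 * INR n * ln (INR n) * Sconst n r Ustar ^ 2 <= gamma ^ 2 * INR m).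
  { apply Rge_le in Hm. apply Rmult_le_compat_l with (r := gamma ^ 2) in Hm; [|nra].
    replace (gamma ^ 2 * (8192 / gamma ^ 2 * INR n * ln (INR n) * Sconst n r Ustar ^ 2))
      with (8192 * INR n * ln (INR n) * Sconst n r Ustar ^ 2) in Hm by (field; lra). exact Hm. }
  assert (Hm_pos : 0 < INR m).
  { assert (0 < INR n) by (apply lt_0_INR; lia).
    assert (0 < 8192 * INR n * ln (INR n) * Sconst n r Ustar ^ 2)
      by (repeat apply Rmult_lt_0_compat; try apply pow_lt; lra).
    nra. }
  apply prob_good_event_ge; auto. intros i Hi; apply Habc, Hi.
Qed.
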